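(* Let $X,Y$ be complex Banach spaces, $\emptyset\ne I\subseteq\mathbb R^n$, let $\mathcal B$ be a non-empty collection of non-empty subsets of $X$ such that every $x\in X$ belongs to some $B\in\mathcal B$, and let $\mathrm R$ be a non-empty collection of sequences in $\mathbb R^n$ such that $\mathbf t+\mathbf b(l)\in I$ whenever $\mathbf t\in I$, $\mathbf b\in\mathrm R$, $l\in\mathbb N$, and such that every subsequence of a sequence in $\mathrm R$ belongs to $\mathrm R$. Let $f:I\to\mathbb C$ be bounded and $\mathrm R$-multi-almost periodic, and let $F:I\times X\to Y$ be $(\mathrm R,\mathcal B)$-multi-almost periodic and bounded on each set $I\times B$, $B\in\mathcal B$. Then $F_1(\mathbf t;x):=f(\mathbf t)F(\mathbf t;x)$, $\mathbf t\in I$, $x\in X$, is $(\mathrm R,\mathcal B)$-multi-almost periodic.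
   Context: A continuous $F:I\times X\to Y$ is $(\mathrm R,\mathcal B)$-multi-almost periodic if for every $B\in\mathcal B$ and every $(\mathbf b_k)\in\mathrm R$ there exist a subsequence $(\mathbf b_{k_l})$ and a function $F^\ast:I\times X\to Y$ with $\lim_{l\to\infty}F(\mathbf t+\mathbf b_{k_l};x)=F^\ast(\mathbf t;x)$ uniformly for $x\in B$, $\mathbf t\in I$. A continuous $f:I\to\mathbb C$ is $\mathrm R$-multi-almost periodic if for every $(\mathbf b_k)\in\mathrm R$ there exist a subsequence $(\mathbf b_{k_l})$ and $f^\ast:I\to\mathbb C$ with $f(\mathbf t+\mathbf b_{k_l})\to f^\ast(\mathbf t)$ uniformly on $I$. *)

From mathcomp Require Import all_boot all_order all_algebra.
From mathcomp Require Import all_classical all_reals all_analysis.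
From mathcomp Require Export complex.
Import numFieldNormedType.Exports.
Set Implicit Arguments. Unset Strict Implicit. Unset Printing Implicit Defensive.
Import Order.TTheory GRing.Theory Num.Theory.
Local Open Scope ring_scope.
Local Open Scope classical_set_scope.

Definition is_subseq {T : Type} (b c : nat -> T) : Prop :=
  exists phi : nat -> nat, {homo phi : k l / (k < l)%N} /\ c = b \o phi.

Definition RB_multi_almost_periodic (R : realType) (n : nat)
  (X Y : normedModType R[i]) (I : set 'rV[R]_n)
  (Rs : set (nat -> 'rV[R]_n)) (Bs : set (set X))
  (F : 'rV[R]_n -> X -> Y) : Prop :=
  {within I `*` [set: X], continuous (fun p : 'rV[R]_n * X => F p.1 p.2)} /\
  forall B, Bs B -> forall b, Rs b ->
    exists phi : nat -> nat, {homo phi : k l / (k < l)%N} /\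
    exists Fs : 'rV[R]_n -> X -> Y,
      forall eps : R[i], 0 < eps -> exists N : nat, forall l : nat, (N <= l)%N ->
        forall t x, I t -> B x -> `|F (t + b (phi l)) x - Fs t x| < eps.

Definition R_multi_almost_periodic (R : realType) (n : nat)
  (I : set 'rV[R]_n) (Rs : set (nat -> 'rV[R]_n)) (f : 'rV[R]_n -> R[i]^o) : Prop :=
  {within I, continuous f} /\
  forall b, Rs b ->
    exists phi : nat -> nat, {homo phi : k l / (k < l)%N} /\
    exists fs : 'rV[R]_n -> R[i]^o,
      forall eps : R[i], 0 < eps -> exists N : nat, forall l : nat, (N <= l)%N ->
        forall t, I t -> `|f (t + b (phi l)) - fs t| < eps.

From mathcomp Require Import all_boot all_order all_algebra.
From mathcomp Require Import all_classical all_reals all_analysis.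
From mathcomp Require Import complex.
Import numFieldNormedType.Exports.
Import Order.TTheory GRing.Theory Num.Theory.
Local Open Scope ring_scope.
Local Open Scope classical_set_scope.

(* Along a subsequence of b on which f converges uniformly, extract a further
   subsequence (again in R, which is closed under subsequences) on which F
   converges uniformly on I x B.  Along the composite subsequence both
   translates converge uniformly and are uniformly bounded, and
   a g - a' g' = (a - a') g + a' (g - g') shows that their product converges
   uniformly as well. *)

Section WithinContinuity.
Set Implicit Arguments.
Unset Strict Implicit.

Lemma within_continuousZ {T : topologicalType} {K : numFieldType}
    {V : normedModType K} (A : set T) (s : T -> K) (f : T -> V) :
  {within A, continuous s} -> {within A, continuous f} ->
  {within A, continuous (fun x => s x *: f x)}.
Proof. by move=> cs cf x; apply: cvgZ; [exact: cs | exact: cf]. Qed.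

Lemma within_continuous_fst {T U Z : topologicalType} (A : set T) (B : set U)
    (f : T -> Z) :
  {within A, continuous f} -> {within A `*` B, continuous (fun p => f p.1)}.
Proof.
move=> cf; apply/continuous_subspace_prodP => p _.
apply: (@continuous_comp (subspace A * subspace B)%type (subspace A) Z fst f).
  exact: cvg_fst.
exact: cf.
Qed.

End WithinContinuity.

Section UniformConvergence.
Set Implicit Arguments.
Unset Strict Implicit.
Context {K : numFieldType}.

Definition uniform_cvg_on (V : normedModType K) (T : Type) (P : set T)
    (u : nat -> T -> V) (v : T -> V) : Prop :=
  forall eps : K, 0 < eps -> exists N : nat, forall l : nat, (N <= l)%N ->
    forall t, P t -> `|u l t - v t| < eps.

Lemma uniform_cvg_on_subseq (V : normedModType K) (T : Type) (P : set T)
    (u : nat -> T -> V) (v : T -> V) (phi : nat -> nat) :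
  {homo phi : k l / (k < l)%N} ->
  uniform_cvg_on P u v -> uniform_cvg_on P (fun l => u (phi l)) v.
Proof.
move=> phi_incr uv eps eps_gt0; have [N uvN] := uv eps eps_gt0.
exists N => l Nl; apply: uvN.
exact: leq_trans Nl (unstable.mono_leq_infl (leq_mono phi_incr) l).
Qed.

Lemma uniform_cvg_on_comp (V : normedModType K) (S T : Type) (Q : set S)
    (P : set T) (h : S -> T) (u : nat -> T -> V) (v : T -> V) :
  (forall s, Q s -> P (h s)) -> uniform_cvg_on P u v ->
  uniform_cvg_on Q (fun l s => u l (h s)) (v \o h).
Proof.
move=> QP uv eps eps_gt0; have [N uvN] := uv eps eps_gt0.
by exists N => l Nl s Qs; apply/uvN/QP.
Qed.

Lemma uniform_cvg_on_setXP (V : normedModType K) (T U : Type) (A : set T)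
    (B : set U) (u : nat -> T -> U -> V) (v : T -> U -> V) :
  uniform_cvg_on (A `*` B) (fun l p => u l p.1 p.2) (fun p => v p.1 p.2) <->
  (forall eps : K, 0 < eps -> exists N : nat, forall l : nat, (N <= l)%N ->
    forall t x, A t -> B x -> `|u l t x - v t x| < eps).
Proof.
split=> uv eps /uv[N uvN]; exists N => l Nl.
  by move=> t x At Bx; exact: (uvN l Nl (t, x)).
by move=> [t x] [/= At Bx]; exact: uvN.
Qed.

Lemma uniform_cvg_on_bounded (V : normedModType K) (T : Type) (P : set T)
    (u : nat -> T -> V) (v : T -> V) (M : K) :
  (forall l t, P t -> `|u l t| <= M) -> uniform_cvg_on P u v ->
  forall t, P t -> `|v t| <= M + 1.
Proof.
move=> uM uv t Pt; have [N uvN] := uv 1 ltr01.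
have -> : v t = u N t - (u N t - v t) by rewrite subKr.
apply: le_trans (ler_normB _ _) _.
by rewrite lerD ?uM // ltW ?uvN.
Qed.

Lemma uniform_cvg_onZ (V : normedModType K) (T : Type) (P : set T)
    (a : nat -> T -> K^o) (a' : T -> K^o) (g : nat -> T -> V) (g' : T -> V)
    (Ma Mg : K) :
  (forall l t, P t -> `|a l t| <= Ma) -> (forall l t, P t -> `|g l t| <= Mg) ->
  uniform_cvg_on P a a' -> uniform_cvg_on P g g' ->
  uniform_cvg_on P (fun l t => a l t *: g l t) (fun t => a' t *: g' t).
Proof.
move=> aM gM aa' gg' eps eps_gt0.
have {}aM l t : P t -> `|a l t| <= `|Ma|.
  move=> /(aM l) aMt; have M_ge0 := le_trans (normr_ge0 _) aMt.
  by rewrite (ger0_norm M_ge0).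
have {}gM l t : P t -> `|g l t| <= `|Mg|.
  move=> /(gM l) gMt; have M_ge0 := le_trans (normr_ge0 _) gMt.
  by rewrite (ger0_norm M_ge0).
pose C := `|Mg| + (`|Ma| + 1).
have C_gt0 : 0 < C by rewrite ltr_wpDl // ltr_wpDl.
have epsC_gt0 : 0 < eps / C by rewrite divr_gt0.
have [Na aNa] := aa' _ epsC_gt0; have [Ng gNg] := gg' _ epsC_gt0.
exists (maxn Na Ng) => l; rewrite geq_max => /andP[Nal Ngl] t Pt.
have -> : a l t *: g l t - a' t *: g' t =
          (a l t - a' t) *: g l t + a' t *: (g l t - g' t).
  by rewrite scalerBl scalerBr addrA subrK.
apply: le_lt_trans (ler_normD _ _) _; rewrite !normrZ.
apply: (@le_lt_trans _ _ (eps / C * `|Mg| + (`|Ma| + 1) * `|g l t - g' t|)).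
  apply: lerD; first by rewrite ler_pM ?gM // ltW ?aNa.
  by rewrite ler_wpM2r // (uniform_cvg_on_bounded aM aa' Pt).
apply: (@lt_le_trans _ _ (eps / C * `|Mg| + (`|Ma| + 1) * (eps / C))).
  by rewrite ltrD2l ltr_pM2l ?gNg // ltr_wpDl.
by rewrite [_ * (eps / C)]mulrC -mulrDr mulfVK ?gt_eqF.
Qed.

End UniformConvergence.

Theorem proposition2p20 (R : realType) (n : nat)
  (X Y : completeNormedModType R[i])
  (I : set 'rV[R]_n) (Bs : set (set X)) (Rs : set (nat -> 'rV[R]_n))
  (f : 'rV[R]_n -> R[i]^o) (F : 'rV[R]_n -> X -> Y) :
  I !=set0 ->
  Bs !=set0 ->
  (forall B, Bs B -> B !=set0) ->
  (forall x : X, exists B, Bs B /\ B x) ->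
  Rs !=set0 ->
  (forall t b (l : nat), I t -> Rs b -> I (t + b l)) ->
  (forall b c, Rs b -> is_subseq b c -> Rs c) ->
  (exists M : R[i], forall t, I t -> `|f t| <= M) ->
  R_multi_almost_periodic I Rs f ->
  RB_multi_almost_periodic I Rs Bs F ->
  (forall B, Bs B -> exists M : R[i], forall t x, I t -> B x -> `|F t x| <= M) ->
  RB_multi_almost_periodic I Rs Bs (fun t x => f t *: F t x).
Proof.
move=> _ _ _ _ _ IRs Rs_subseq [Mf fM] [fc fap] [Fc Fap] FM.
split.
  exact: within_continuousZ (within_continuous_fst (B := [set: X]) fc) Fc.
move=> B Bs_B b Rs_b.
have [phi1 [phi1_incr [fs fs_lim]]] := fap b Rs_b.
have Rs_bphi1 : Rs (b \o phi1) by apply: Rs_subseq Rs_b _; exists phi1.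
have [phi2 [phi2_incr [Fs Fs_lim]]] := Fap B Bs_B _ Rs_bphi1.
have [MF FMB] := FM B Bs_B.
exists (phi1 \o phi2); split; first by move=> k l kl; apply/phi1_incr/phi2_incr.
exists (fun t x => fs t *: Fs t x); apply/(uniform_cvg_on_setXP I B).
apply: (uniform_cvg_onZ (Ma := Mf) (Mg := MF)).
- by move=> l [t x] [/= It _]; apply/fM/IRs.
- by move=> l [t x] [/= It Bx]; apply: FMB => //; apply: IRs.
- apply: (uniform_cvg_on_comp (h := fst) (P := I)
    (u := fun l t => f (t + b (phi1 (phi2 l))))) => [p []//|].
  exact: uniform_cvg_on_subseq phi2_incr fs_lim.
- apply/(uniform_cvg_on_setXP I B (fun l t => F (t + b (phi1 (phi2 l)))) Fs).
  exact: Fs_lim.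
Qed.
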